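(* Let $(\mathcal A,\varphi,\mathcal F,\Phi)$ be a ncps of type B$'$ with associated infinitesimal ncps $(\mathcal B,\varphi,\varphi')$. Let $\mathcal A_1$ be a subalgebra of $\mathcal A$ containing $1_{\mathcal A}$ and $\mathcal F_1$ a subalgebra of $\mathcal F$. Then $(\mathcal A_1,\mathcal F_1)$ is cyclic-antimonotone independent in $(\mathcal A,\varphi,\mathcal F,\Phi)$ if and only if $\mathcal A_1':=\mathcal A_1\oplus\{0_{\mathcal F}\}$ and $\mathcal F_1':=\mathbb C1_{\mathcal A}\oplus\mathcal F_1$ are infinitesimally free in $(\mathcal B,\varphi,\varphi')$.
   Context: A ncps of type B$'$ is $(\mathcal A,\varphi,\mathcal F,\Phi)$ where $\mathcal A$ is a unital complex algebra, $\varphi:\mathcal A\to\mathbb C$ linear with $\varphi(1_{\mathcal A})=1$, $\mathcal F$ a complex algebra which is an $\mathcal A$-bimodule compatible with the multiplication of $\mathcal F$, and $\Phi:\mathcal F\to\mathbb C$ linear. The associated algebra is $\mathcal B=\mathcal A\oplus\mathcal F$ with product $(a_1,f_1)(a_2,f_2)=(a_1a_2,a_1f_2+f_1a_2+f_1f_2)$ and unit $1_{\mathcal A}$; the associated infinitesimal ncps is $(\mathcal B,\varphi,\varphi')$ with $\varphi(a+f):=\varphi(a)$, $\varphi'(a+f):=\Phi(f)$. $(\mathcal A_1,\mathcal F_1)$ is cyclic-antimonotone independent if $\Phi(a_0f_1a_1f_2\cdots a_{n-1}f_na_n)=\varphi(a_0a_n)\big[\prod_{i=1}^{n-1}\varphi(a_i)\big]\Phi(f_1\cdots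 f_n)$ for all $n\in\mathbb N$, $a_l\in\mathcal A_1$, $f_l\in\mathcal F_1$. In an infinitesimal ncps $(\mathcal B,\varphi,\varphi')$ ($\varphi(1)=1$, $\varphi'(1)=0$), unital subalgebras $(\mathcal B_i)_{i\in I}$ are infinitesimally free if for every $n\ge1$, $i_1,\dots,i_n\in I$ with $i_l\ne i_{l+1}$, and $b_l\in\mathcal B_{i_l}$ with $\varphi(b_l)=0$: $\varphi(b_1\cdots b_n)=0$, and $\varphi'(b_1\cdots b_n)=\varphi(b_1b_n)\varphi(b_2b_{n-1})\cdots\varphi(b_{(n-1)/2}b_{(n+3)/2})\varphi'(b_{(n+1)/2})$ if $n$ is odd and $i_1=i_n,\ i_2=i_{n-1},\dots,i_{(n-1)/2}=i_{(n+3)/2}$, while $\varphi'(b_1\cdots b_n)=0$ otherwise. *)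

From HB Require Import structures.
From mathcomp Require Import all_boot all_algebra.
From mathcomp Require Import reals complex.
Set Implicit Arguments. Unset Strict Implicit. Unset Printing Implicit Defensive.
Import GRing.Theory.
Local Open Scope ring_scope.

Section NCPS.
Variable R : realType.
Local Notation C := (R[i]).

(* A is a unital complex algebra (algType), F a complex vector space with a
   (possibly non-unital) associative bilinear multiplication [mulF], and an
   A-bimodule structure ([la] left action, [ra] right action) compatible with
   the multiplication of F. *)
Record ncpsB' (A : algType C) (F : lmodType C) := NcpsB' {
  phi : A -> C;
  Phi : F -> C;
  mulF : F -> F -> F;
  la : A -> F -> F;
  ra : F -> A -> F;
  phi_lin : forall (c : C) (x y : A), phi (c *: x + y) = c * phi x + phi y;
  phi1 : phi 1 = 1;
  Phi_lin : forall (c : C) (x y : F), Phi (c *: x + y) = c * Phi x + Phi y;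
  mulF_linl : forall (c : C) (x y z : F),
      mulF (c *: x + y) z = c *: mulF x z + mulF y z;
  mulF_linr : forall (c : C) (x y z : F),
      mulF z (c *: x + y) = c *: mulF z x + mulF z y;
  mulF_assoc : forall x y z : F, mulF x (mulF y z) = mulF (mulF x y) z;
  la_linl : forall (c : C) (a b : A) (f : F), la (c *: a + b) f = c *: la a f + la b f;
  la_linr : forall (c : C) (a : A) (f g : F), la a (c *: f + g) = c *: la a f + la a g;
  ra_linl : forall (c : C) (a : A) (f g : F), ra (c *: f + g) a = c *: ra f a + ra g a;
  ra_linr : forall (c : C) (a b : A) (f : F), ra f (c *: a + b) = c *: ra f a + ra f b;
  la1 : forall f : F, la 1 f = f;
  ra1 : forall f : F, ra f 1 = f;
  laM : forall (a b : A) (f : F), la (a * b) f = la a (la b f);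
  raM : forall (a b : A) (f : F), ra f (a * b) = ra (ra f a) b;
  la_ra : forall (a b : A) (f : F), la a (ra f b) = ra (la a f) b;
  la_mulF : forall (a : A) (f g : F), la a (mulF f g) = mulF (la a f) g;
  ra_mulF : forall (a : A) (f g : F), ra (mulF f g) a = mulF f (ra g a);
  mulF_ra_la : forall (a : A) (f g : F), mulF (ra f a) g = mulF f (la a g)
}.

Variables (A : algType C) (F : lmodType C) (S : ncpsB' A F).

(* The associated algebra B = A (+) F, with elements represented as pairs. *)
Definition Bmul (x y : A * F) : A * F :=
  (x.1 * y.1, la S x.1 y.2 + ra S x.2 y.1 + mulF S x.2 y.2).
Definition Bone : A * F := (1, 0).
Definition inA (a : A) : A * F := (a, 0).
Definition inF (f : F) : A * F := (0, f).
Definition Bprod (s : seq (A * F)) : A * F := foldr Bmul Bone s.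

Definition phiB (x : A * F) : C := phi S x.1.
Definition phiB' (x : A * F) : C := Phi S x.2.

Definition cyclic_antimonotone (A1 : {pred A}) (F1 : {pred F}) : Prop :=
  forall (n : nat) (a : nat -> A) (f : nat -> F),
    (1 <= n)%N ->
    (forall l, (l <= n)%N -> a l \in A1) ->
    (forall l, (1 <= l <= n)%N -> f l \in F1) ->
    Phi S (Bprod (inA (a 0%N) ::
              flatten [seq [:: inF (f l); inA (a l)] | l <- iota 1 n])).2
    = phi S (a 0%N * a n) * (\prod_(1 <= i < n) phi S (a i))
      * Phi S (Bprod [seq inF (f l) | l <- iota 1 n]).2.

Definition inf_free (I : eqType) (Bs : I -> A * F -> Prop) : Prop :=
  forall (N : nat) (ii : nat -> I) (b : nat -> A * F),
    (1 <= N)%N ->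
    (forall k, (k.+1 < N)%N -> ii k != ii k.+1) ->
    (forall k, (k < N)%N -> Bs (ii k) (b k)) ->
    (forall k, (k < N)%N -> phiB (b k) = 0) ->
    phiB (Bprod [seq b k | k <- iota 0 N]) = 0 /\
    phiB' (Bprod [seq b k | k <- iota 0 N]) =
      (if odd N && [forall k : 'I_N./2, ii k == ii (N.-1 - k)%N]
       then (\prod_(k < N./2) phiB (Bmul (b k) (b (N.-1 - k)%N)))
            * phiB' (b N./2)
       else 0).

Definition A1' (A1 : {pred A}) (x : A * F) : Prop :=
  x.1 \in A1 /\ x.2 = 0.
Definition F1' (F1 : {pred F}) (x : A * F) : Prop :=
  (exists c : C, x.1 = c *: 1) /\ x.2 \in F1.

End NCPS.

From HB Require Import structures.
From mathcomp Require Import all_boot all_algebra.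
From mathcomp Require Import reals complex.
From mathcomp Require Import ring.
Set Implicit Arguments. Unset Strict Implicit. Unset Printing Implicit Defensive.
Import GRing.Theory.
Local Open Scope ring_scope.

(* Work with words in letters a from A1 and f from F1.  Writing an interior
   letter a as phi(a) 1 + (a - phi(a) 1), whose scalar part merges the two
   neighbouring letters of F1, multilinearity reduces
   Phi(a0 f1 a1 ... fn an) to values of phi' on alternating words in
   phi-centered elements of A1 and elements of F1, the latter being exactly the
   phi-centered elements of F1'.  On such words infinitesimal freeness
   prescribes phi' = 0 except on the words f and a f a', where it gives Phi(f)
   and phi(a a') Phi(f); after the reduction this is the cyclic-antimonotone
   formula.  Conversely, padding an alternating centered word with 1 at its
   ends yields a cyclic-antimonotone word, whose value vanishes as soon as the
   word has an interior centered letter of A1. *)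

Section LinearFunctions.
Variables (K : pzRingType) (U : lmodType K) (V : zmodType).
Variables (s : K -> V -> V) (g : U -> V).
Hypotheses (s1 : forall v, s 1 v = v)
  (g_lin : forall c x y, g (c *: x + y) = s c (g x) + g y).

Lemma lin_fun0 : g 0 = 0.
Proof.
have := g_lin 1 0 0; rewrite scale1r addr0 s1 => g00.
by apply: (addrI (g 0)); rewrite addr0 -g00.
Qed.

Lemma lin_funD : {morph g : x y / x + y}.
Proof. by move=> x y; rewrite -{1}[x]scale1r g_lin s1. Qed.

End LinearFunctions.
Arguments lin_fun0 {K U V s} g.
Arguments lin_funD {K U V s} g.

Lemma scalerD3 (K : pzRingType) (V : lmodType K) (c : K) (u1 u2 u3 v1 v2 v3 : V) :
  c *: u1 + v1 + (c *: u2 + v2) + (c *: u3 + v3) = c *: (u1 + u2 + u3) + (v1 + v2 + v3).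
Proof. by rewrite !scalerDr (addrACA (c *: u1)) (addrACA (c *: u1 + c *: u2)). Qed.

Lemma belast_iota m n : belast m (iota m.+1 n) = iota m n.
Proof. by elim: n m => //= n IH m; rewrite IH. Qed.

Lemma last_iota m n : last m (iota m.+1 n) = (m + n)%N.
Proof. by elim: n m => [|n IH] m /=; rewrite ?addn0 // IH addSnnS. Qed.

Section NcpsB'.
Variables (R : realType) (A : algType R[i]) (F : lmodType R[i]) (S : ncpsB' A F).
Local Notation C := R[i].
Local Notation phi := (phi S).
Local Notation Phi := (Phi S).
Local Notation la := (la S).
Local Notation ra := (ra S).
Local Notation mulF := (mulF S).
Local Notation Bmul := (Bmul S).
Local Notation Bprod := (Bprod S).
Local Notation inA := (@inA _ A F).
Local Notation inF := (@inF _ A F).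
Local Notation Bone := (@Bone _ A F).

Lemma phi0 : phi 0 = 0.
Proof. exact: lin_fun0 phi (@mul1r _) (phi_lin S). Qed.
Lemma Phi0 : Phi 0 = 0.
Proof. exact: lin_fun0 Phi (@mul1r _) (Phi_lin S). Qed.

Lemma la0l f : la 0 f = 0.
Proof. exact: lin_fun0 (la^~ f) (@scale1r _ _) (fun c a b => la_linl S c a b f). Qed.
Lemma la0r a : la a 0 = 0.
Proof. exact: lin_fun0 (la a) (@scale1r _ _) (fun c f g => la_linr S c a f g). Qed.
Lemma ra0l a : ra 0 a = 0.
Proof. exact: lin_fun0 (ra^~ a) (@scale1r _ _) (fun c f g => ra_linl S c a f g). Qed.
Lemma ra0r f : ra f 0 = 0.
Proof. exact: lin_fun0 (ra f) (@scale1r _ _) (fun c a b => ra_linr S c a b f). Qed.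
Lemma mulF0l f : mulF 0 f = 0.
Proof. exact: lin_fun0 (mulF^~ f) (@scale1r _ _) (fun c g h => mulF_linl S c g h f). Qed.
Lemma mulF0r f : mulF f 0 = 0.
Proof. exact: lin_fun0 (mulF f) (@scale1r _ _) (fun c g h => mulF_linr S c g h f). Qed.

Lemma laDr a : {morph la a : f g / f + g}.
Proof. exact: lin_funD (la a) (@scale1r _ _) (fun c f g => la_linr S c a f g). Qed.
Lemma raDl a : {morph ra^~ a : f g / f + g}.
Proof. exact: lin_funD (ra^~ a) (@scale1r _ _) (fun c f g => ra_linl S c a f g). Qed.
Lemma mulFDl f : {morph mulF^~ f : g h / g + h}.
Proof. exact: lin_funD (mulF^~ f) (@scale1r _ _) (fun c g h => mulF_linl S c g h f). Qed.
Lemma mulFDr f : {morph mulF f : g h / g + h}.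
Proof. exact: lin_funD (mulF f) (@scale1r _ _) (fun c g h => mulF_linr S c g h f). Qed.

Lemma Bmul_linear_l z c x y : Bmul (c *: x + y) z = c *: Bmul x z + Bmul y z.
Proof.
case: x y z => [x1 x2] [y1 y2] [z1 z2]; rewrite /Bmul /=.
by rewrite mulrDl -scalerAl la_linl ra_linl mulF_linl scalerD3.
Qed.

Lemma Bmul_linear_r x c y z : Bmul x (c *: y + z) = c *: Bmul x y + Bmul x z.
Proof.
case: x y z => [x1 x2] [y1 y2] [z1 z2]; rewrite /Bmul /=.
by rewrite mulrDr -scalerAr la_linr ra_linr mulF_linr scalerD3.
Qed.

Lemma Bmul_assoc x y z : Bmul x (Bmul y z) = Bmul (Bmul x y) z.
Proof.
case: x y z => [x1 x2] [y1 y2] [z1 z2]; rewrite /Bmul /=; congr pair; first exact: mulrA.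
rewrite !laDr !mulFDr !raDl !mulFDl laM raM la_ra la_mulF mulF_ra_la ra_mulF mulF_assoc.
by rewrite !addrA [LHS](ACl (1*2*4*6*3*5*7))%AC.
Qed.

Lemma Bmul1l x : Bmul Bone x = x.
Proof. by case: x => a f; rewrite /Bmul /= mul1r la1 ra0l mulF0l !addr0. Qed.

Lemma Bmul1r x : Bmul x Bone = x.
Proof. by case: x => a f; rewrite /Bmul /= mulr1 la0r ra1 mulF0r addr0 add0r. Qed.

Lemma Bmul_inF f g : Bmul (inF f) (inF g) = inF (mulF f g).
Proof. by rewrite /Bmul /= mul0r la0l ra0r !add0r. Qed.

Lemma Bprod_cat s1 s2 : Bprod (s1 ++ s2) = Bmul (Bprod s1) (Bprod s2).
Proof. by elim: s1 => [|x s1 IH] /=; rewrite ?Bmul1l // IH Bmul_assoc. Qed.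

Lemma Bprod_1 s1 s2 : Bprod (s1 ++ Bone :: s2) = Bprod (s1 ++ s2).
Proof. by rewrite !Bprod_cat /= Bmul1l. Qed.

Lemma Bprod_linear s1 s2 c x y :
  Bprod (s1 ++ (c *: x + y) :: s2) = c *: Bprod (s1 ++ x :: s2) + Bprod (s1 ++ y :: s2).
Proof. by rewrite !Bprod_cat /= Bmul_linear_l Bmul_linear_r. Qed.

Definition center (a : A) : A := (- phi a) *: 1 + a.

Lemma phi_center a : phi (center a) = 0.
Proof. by rewrite /center (phi_lin S) (phi1 S) mulr1 addNr. Qed.

Lemma centerK a : phi a *: 1 + center a = a.
Proof. by rewrite /center addrA -scalerDl subrr scale0r add0r. Qed.

Lemma phi_mulE a b : phi (a * b) = phi a * phi b + phi (center a * center b).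
Proof.
rewrite [center b]/center mulrDr -scalerAr mulr1 (phi_lin S) phi_center mulr0 add0r.
by rewrite /center mulrDl -scalerAl mul1r (phi_lin S) mulNr addNKr.
Qed.

(* A letter [inl a] stands for a (+) 0 and [inr f] for 0 (+) f. *)
Definition embB (t : A + F) : A * F :=
  match t with inl a => inA a | inr f => inF f end.

Definition isA (t : A + F) : bool := if t is inl _ then true else false.

Definition alt : rel (A + F) := fun t t' => isA t != isA t'.

Definition letter_of (i : bool) (x : A * F) : A + F :=
  if i then inl x.1 else inr x.2.

Lemma letter_ofK t : letter_of (isA t) (embB t) = t.
Proof. by case: t. Qed.

Lemma isA_letter_of i x : isA (letter_of i x) = i.
Proof. by case: i. Qed.

Definition phiW' (w : seq (A + F)) : C := phiB' S (Bprod (map embB w)).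
Arguments phiW' : simpl never.

Definition free_moment (w : seq (A + F)) : C :=
  match w with
  | [:: inr f] => Phi f
  | [:: inl a; inr f; inl a'] => phi (a * a') * Phi f
  | _ => 0
  end.

Arguments free_moment : simpl never.

Lemma free_moment_long w : (3 < size w)%N -> free_moment w = 0.
Proof. by case: w => [|[?|?] [|[?|?] [|[?|?] [|? ?]]]]. Qed.

Lemma free_moment_inr f t w : free_moment [:: inr f, t & w] = 0.
Proof. by case: t. Qed.

Lemma phiW'_split w1 w2 a :
  phiW' (w1 ++ inl a :: w2) = phi a * phiW' (w1 ++ w2) + phiW' (w1 ++ inl (center a) :: w2).
Proof.
rewrite /phiW' /phiB' !map_cat /= -{1}(centerK a).
have -> : inA (phi a *: 1 + center a) = phi a *: Bone + inA (center a).
  by apply/eqP; rewrite xpair_eqE /= scaler0 addr0 !eqxx.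
by rewrite (Bprod_linear (map embB w1) (map embB w2)) /= (Phi_lin S) Bprod_1.
Qed.

Lemma phiW'_merge w1 w2 f g :
  phiW' (w1 ++ inr f :: inr g :: w2) = phiW' (w1 ++ inr (mulF f g) :: w2).
Proof. by rewrite /phiW' !map_cat !Bprod_cat /= (Bmul_assoc (inF f)) Bmul_inF. Qed.

Definition inf_free_moment (N : nat) (ii : nat -> bool) (b : nat -> A * F) : C :=
  if odd N && [forall k : 'I_N./2, ii k == ii (N.-1 - k)%N]
  then (\prod_(k < N./2) phiB S (Bmul (b k) (b (N.-1 - k)%N))) * phiB' S (b N./2)
  else 0.

Lemma inf_free_moment_alternating N ii b :
    (forall k, (k.+1 < N)%N -> ii k != ii k.+1) ->
    (forall k, (k < N)%N -> embB (letter_of (ii k) (b k)) = b k) ->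
  inf_free_moment N ii b = free_moment [seq letter_of (ii k) (b k) | k <- iota 0 N].
Proof.
move=> alt_ii pure.
(* A mirrored pair of letters from F1' has a zero A-part. *)
have vanish k : (k < N./2)%N -> ~~ ii k -> ~~ ii (N.-1 - k)%N ->
    \prod_(j < N./2) phiB S (Bmul (b j) (b (N.-1 - j)%N)) = 0.
  move=> kN ik ik'; rewrite (bigD1 (Ordinal kN)) //= /phiB /=.
  have kN' : (k < N)%N by apply: leq_trans kN _; rewrite -divn2 leq_div.
  by rewrite -(pure k kN') (negbTE ik) /= mul0r phi0 mul0r.
rewrite /inf_free_moment; case: N alt_ii pure vanish => [|[|[|[|N]]]] alt_ii pure vanish //.
- rewrite /= big_ord0 mul1r.
  have -> : [forall k : 'I_0, ii k == ii (0 - k)%N] by apply/forallP => -[].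
  by rewrite -[in LHS](pure 0%N) //; case: (letter_of _ _) => [a|f] //; exact: Phi0.
- by rewrite /=; case: (letter_of (ii 0%N) _) => [?|?] //; case: (letter_of _ _).
- have ii1 : ii 1%N = ~~ ii 0%N.
    by move: (alt_ii 0%N erefl); case: (ii 0%N); case: (ii 1%N).
  have ii2 : ii 2%N = ii 0%N.
    by move: (alt_ii 1%N erefl); rewrite ii1; case: (ii 0%N); case: (ii 2%N).
  have -> : [forall k : 'I_(3./2), ii k == ii (3.-1 - k)%N].
    by apply/forallP => -[[|//] ?]; rewrite /= ii2.
  case i0 : (ii 0%N) in ii1 ii2 *; last by rewrite (vanish 0%N) ?i0 ?ii2 //= mul0r i0.
  rewrite /= big_ord_recl big_ord0 mulr1 -[in LHS](pure 0%N) // -[in LHS](pure 1%N) //.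
  by rewrite -[in LHS](pure 2%N) // i0 ii1 ii2.
- rewrite free_moment_long ?size_map ?size_iota //.
  case: ifP => // /andP[oddN /forallP sym].
  have half : (1 < N.+4./2)%N by case: N oddN {alt_ii pure vanish sym}.
  case i0 : (ii 0%N).
    have i1 : ~~ ii 1%N by move: (alt_ii 0%N erefl); rewrite i0.
    by rewrite (vanish 1%N) ?mul0r // -(eqP (sym (Ordinal half))).
  by rewrite (vanish 0%N) ?mul0r ?i0 // -(eqP (sym (Ordinal (ltnW half)))) i0.
Qed.

Variables (A1 : {pred A}) (F1 : {pred F}).
Local Notation Bs := (fun i : bool => if i then A1' A1 else F1' F1).

(* The phi-centered elements of F1' = C 1 (+) F1 are exactly the 0 (+) f with f in F1. *)
Definition centered (t : A + F) : bool :=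
  match t with inl a => (a \in A1) && (phi a == 0) | inr f => f \in F1 end.
Arguments centered : simpl never.

Lemma centered_phi a : centered (inl a) -> phi a = 0.
Proof. by case/andP=> _ /eqP. Qed.

Definition inf_free_words : Prop :=
  forall w, sorted alt w -> all centered w -> phiW' w = free_moment w.

Lemma centered_letter t : centered t -> Bs (isA t) (embB t) /\ phiB S (embB t) = 0.
Proof.
case: t => [a /andP[aA /eqP pa] | f fF] //=.
by split; [split => //; exists 0; rewrite scale0r | exact: phi0].
Qed.

Lemma letter_of_centered i x :
  Bs i x -> phiB S x = 0 -> embB (letter_of i x) = x /\ centered (letter_of i x).
Proof.
case: x => a f; case: i => [[/= aA ->] | [[c /= ->] fF]]; rewrite /phiB /= => pa.
  by rewrite /centered aA pa eqxx.
have pc : phi (c *: 1) = c.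
  by have := phi_lin S c 1 0; rewrite addr0 phi0 (phi1 S) addr0 mulr1.
by rewrite -pc pa scale0r.
Qed.

Lemma phiB_alternating w :
  w != [::] -> sorted alt w -> all centered w -> phiB S (Bprod (map embB w)) = 0.
Proof.
case: w => [//|[a|f] [|t w]] _ /=.
- by move=> _ /andP[/andP[_ /eqP pa] _]; rewrite /phiB /= mulr1.
- by case: t => //= *; rewrite /phiB /= mul0r mulr0 phi0.
- by move=> _ _; rewrite /phiB /= mul0r phi0.
- by move=> *; rewrite /phiB /= mul0r phi0.
Qed.

Lemma inf_free_words_of_inf_free : inf_free S Bs -> inf_free_words.
Proof.
move=> IF [|t0 w'] alt_w cen_w; first exact: Phi0.
set w := t0 :: w' in alt_w cen_w *.
pose ii k := isA (nth t0 w k); pose b k := embB (nth t0 w k).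
have pure k : (k < size w)%N -> embB (letter_of (ii k) (b k)) = b k.
  by rewrite /ii /b letter_ofK.
have [_ IFw] := IF (size w) ii b erefl (fun k => sortedP t0 alt_w k)
  (fun k kw => (centered_letter (all_nthP t0 cen_w k kw)).1)
  (fun k kw => (centered_letter (all_nthP t0 cen_w k kw)).2).
have := inf_free_moment_alternating (fun k => sortedP t0 alt_w k) pure.
have -> : [seq letter_of (ii k) (b k) | k <- iota 0 (size w)] = w.
  by rewrite -[RHS](mkseq_nth t0); apply: eq_map => k; exact: letter_ofK.
move<-; rewrite /phiW' -[in map embB w](mkseq_nth t0 w) -map_comp.
exact: IFw.
Qed.

Lemma inf_free_of_inf_free_words : inf_free_words -> inf_free S Bs.
Proof.
move=> IFw N ii b N1 alt_ii inB cen0.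
have pure k : (k < N)%N ->
    embB (letter_of (ii k) (b k)) = b k /\ centered (letter_of (ii k) (b k)).
  by move=> kN; apply: letter_of_centered; [apply: inB | apply: cen0].
pose w := [seq letter_of (ii k) (b k) | k <- iota 0 N].
have nth_w k : (k < N)%N -> nth (inl 0) w k = letter_of (ii k) (b k).
  by move=> kN; rewrite (nth_map 0%N) ?size_iota // nth_iota.
have Eb : map embB w = [seq b k | k <- iota 0 N].
  by rewrite -map_comp; apply/eq_in_map => k; rewrite mem_iota => /andP[_ /pure[]].
have alt_w : sorted alt w.
  apply/(sortedP (inl 0)) => k; rewrite size_map size_iota => kN; have kN' := ltnW kN.
  by rewrite /alt !nth_w // !isA_letter_of alt_ii.
have cen_w : all centered w.
  by apply/allP => t /mapP[k]; rewrite mem_iota => /andP[_ /pure[_ ?]] ->.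
rewrite -Eb; split.
  by apply: phiB_alternating => //; rewrite -size_eq0 size_map size_iota -lt0n.
exact: etrans (IFw w alt_w cen_w)
  (esym (inf_free_moment_alternating alt_ii (fun k kN => (pure k kN).1))).
Qed.

Hypotheses (A1_1 : 1 \in A1)
  (A1_D : forall x y, x \in A1 -> y \in A1 -> x + y \in A1)
  (A1_Z : forall (c : C) x, x \in A1 -> c *: x \in A1)
  (F1_M : forall f g, f \in F1 -> g \in F1 -> mulF f g \in F1).

Lemma centered_center a : a \in A1 -> centered (inl (center a)).
Proof. by move=> aA; rewrite /centered phi_center eqxx andbT /center A1_D ?A1_Z. Qed.

Definition pair_in (p : F * A) : bool := (p.1 \in F1) && (p.2 \in A1).
Definition pair_centered (p : F * A) : bool := centered (inr p.1) && centered (inl p.2).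

Definition cam_tail (ps : seq (F * A)) : seq (A + F) :=
  flatten [seq [:: inr p.1; inl p.2] | p <- ps].
Definition cam_word (a0 : A) (ps : seq (F * A)) : seq (A + F) := inl a0 :: cam_tail ps.

Definition cam_moment (a0 : A) (p : F * A) (r : seq (F * A)) : C :=
  phi (a0 * last p.2 (map snd r)) * \prod_(a <- belast p.2 (map snd r)) phi a
  * phiW' (map inr (p.1 :: map fst r)).

Definition cyclic_antimonotone_words : Prop :=
  forall a0 p r, a0 \in A1 -> all pair_in (p :: r) ->
  phiW' (cam_word a0 (p :: r)) = cam_moment a0 p r.

Lemma cam_tail_cat ps qs : cam_tail (ps ++ qs) = cam_tail ps ++ cam_tail qs.
Proof. by rewrite /cam_tail map_cat flatten_cat. Qed.

Lemma sorted_cam_word a0 ps : sorted alt (cam_word a0 ps).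
Proof. by elim: ps a0 => //= p ps IH a0; exact: IH. Qed.

Lemma all_centered_cam_tail qs : all centered (cam_tail qs) = all pair_centered qs.
Proof. by elim: qs => //= q qs ->; rewrite andbA. Qed.

Lemma all_centered_cam_word a ps :
  all centered (cam_word a ps) = centered (inl a) && all pair_centered ps.
Proof. by rewrite -all_centered_cam_tail. Qed.

Lemma phiW'_inr f : phiW' [:: inr f] = Phi f.
Proof. by rewrite /phiW' /phiB' /= la0r ra1 mulF0r add0r addr0. Qed.

Lemma phiW'_inl a : phiW' [:: inl a] = 0.
Proof. by rewrite /phiW' /phiB' /= la0r ra0l mulF0l !addr0 Phi0. Qed.

Lemma cam_moment_nil a0 p : cam_moment a0 p [::] = phi (a0 * p.2) * Phi p.1.
Proof. by rewrite /cam_moment /= big_nil mulr1 phiW'_inr. Qed.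

Lemma cam_moment_cons a0 p q r :
  cam_moment a0 p (q :: r) = phi p.2 * cam_moment a0 (mulF p.1 q.1, q.2) r.
Proof. by rewrite /cam_moment /= big_cons (phiW'_merge [::]) /= mulrCA !mulrA. Qed.

Section FromInfinitesimalFreeness.
Hypothesis IFw : inf_free_words.

Lemma phiW'_cam_centered a0 qs f an :
    a0 \in A1 -> an \in A1 -> f \in F1 -> all pair_centered qs ->
  phiW' (cam_word a0 (rcons qs (f, an))) = if qs is [::] then phi (a0 * an) * Phi f else 0.
Proof.
move=> a0A anA fF qsC; set M := rcons (cam_tail qs) (inr f).
have E a a' : cam_word a (rcons qs (f, a')) = inl a :: M ++ [:: inl a'].
  by rewrite /cam_word -cats1 cam_tail_cat /M -cats1 -catA.
have alt4 : sorted alt (inl (center a0) :: M ++ [:: inl (center an)]).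
  by rewrite -E sorted_cam_word.
have cen4 : all centered (inl (center a0) :: M ++ [:: inl (center an)]).
  rewrite -E all_centered_cam_word all_rcons qsC /pair_centered !centered_center //.
  by rewrite /centered fF.
have [alt3 _] := cat_sorted2 (alt4 : sorted alt ((inl (center a0) :: M) ++ _)).
have [cen3 cen2] : all centered (inl (center a0) :: M) /\ all centered (M ++ [:: inl (center an)]).
  move: (cen4) => /= /andP[-> cMn]; split=> //.
  by move: cMn; rewrite all_cat => /andP[].
have cen1 : all centered M by move: cen3 => /andP[].
(* Centering a0 and an leaves four alternating centered words. *)
rewrite E (phiW'_split [::]) /= (phiW'_split M [::]) (phiW'_split (inl _ :: M) [::]) !cats0.
rewrite (IFw (path_sorted alt3) cen1) (IFw (path_sorted alt4) cen2).
rewrite (IFw alt3 cen3) (IFw alt4 cen4).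
clear E alt3 alt4 cen1 cen2 cen3 cen4; rewrite {}/M.
case: qs qsC => [|q qs] _ /=.
  by rewrite /free_moment (phi_mulE a0 an); ring.
rewrite !free_moment_inr !free_moment_long ?mulr0 ?addr0 ?mulr0 //.
all: by rewrite /= ?size_cat size_rcons.
Qed.

(* The scalar part phi(a) 1 of a merges f and g. *)
Lemma phiW'_cam_step a0 ms f a g a' r :
  phiW' (cam_word a0 (ms ++ (f, a) :: (g, a') :: r)) =
  phi a * phiW' (cam_word a0 (ms ++ (mulF f g, a') :: r))
  + phiW' (cam_word a0 (ms ++ (f, center a) :: (g, a') :: r)).
Proof.
have E x rest : cam_word a0 (ms ++ (f, x) :: rest) =
    (cam_word a0 ms ++ [:: inr f]) ++ inl x :: cam_tail rest.
  by rewrite /cam_word cam_tail_cat -catA.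
rewrite !E phiW'_split; congr (_ * _ + _).
by rewrite -catA (phiW'_merge (cam_word a0 ms) (inl a' :: cam_tail r)) /cam_word cam_tail_cat.
Qed.

Lemma phiW'_cam_centered_prefix a0 ms p r :
    a0 \in A1 -> ms != [::] -> all pair_centered ms -> all pair_in (p :: r) ->
  phiW' (cam_word a0 (ms ++ p :: r)) = 0.
Proof.
elim: r ms p => [|[g a'] r IH] ms [f a] a0A ms0 msC.
  by case/andP=> /andP[/= fF aA] _; rewrite cats1 phiW'_cam_centered //; case: ms ms0 {msC}.
case/andP=> /andP[/= fF aA] /andP[/andP[/= gF a'A] rI].
rewrite phiW'_cam_step -[ms ++ (f, _) :: _]cat_rcons !IH ?mulr0 ?addr0 //.
- by rewrite /= /pair_in F1_M ?a'A.
- by case: ms {ms0 msC}.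
- by rewrite all_rcons msC andbT /pair_centered centered_center // /centered fF.
- by rewrite /= /pair_in gF a'A.
Qed.

Lemma phiW'_cam_word a0 p r :
  a0 \in A1 -> all pair_in (p :: r) -> phiW' (cam_word a0 (p :: r)) = cam_moment a0 p r.
Proof.
elim: r p => [|[g a'] r IH] [f a] a0A.
  by case/andP=> /andP[/= fF aA] _; rewrite cam_moment_nil (phiW'_cam_centered (qs := [::])).
case/andP=> /andP[/= fF aA] /andP[/andP[/= gF a'A] rI].
have := phiW'_cam_step a0 [::] f a g a' r; rewrite /= => ->.
rewrite (phiW'_cam_centered_prefix (ms := [:: (f, center a)])) ?addr0 //.
- by rewrite IH ?cam_moment_cons //= /pair_in F1_M ?a'A.
- by rewrite /= andbT /pair_centered centered_center // /centered fF.
- by rewrite /= /pair_in gF a'A.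
Qed.

End FromInfinitesimalFreeness.

Lemma cam_word_iota (a : nat -> A) (f : nat -> F) n :
  inA (a 0%N) :: flatten [seq [:: inF (f l); inA (a l)] | l <- iota 1 n]
  = map embB (cam_word (a 0%N) [seq (f l, a l) | l <- iota 1 n]).
Proof. by rewrite /cam_word /cam_tail /= map_flatten -!map_comp. Qed.

Lemma cam_moment_iota (a : nat -> A) (f : nat -> F) n :
  phi (a 0%N * a n.+1) * (\prod_(1 <= i < n.+1) phi (a i))
    * Phi (Bprod [seq inF (f l) | l <- iota 1 n.+1]).2
  = cam_moment (a 0%N) (f 1%N, a 1%N) [seq (f l, a l) | l <- iota 2 n].
Proof.
rewrite /cam_moment.
have -> : [seq x.2 | x <- [seq (f l, a l) | l <- iota 2 n]] = map a (iota 2 n).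
  by rewrite -map_comp.
rewrite (last_map a) (belast_map a) last_iota belast_iota big_map.
by rewrite /index_iota subSS subn0 add1n /phiW' /= -!map_comp.
Qed.

Lemma cyclic_antimonotoneP : cyclic_antimonotone S A1 F1 <-> cyclic_antimonotone_words.
Proof.
split=> [CA a0 p r a0A psA | CAw [//|n] a f _ aA fF].
  pose a l := if l is l'.+1 then (nth p (p :: r) l').2 else a0.
  pose f l := (nth p (p :: r) l.-1).1.
  have Eps : [seq (f l, a l) | l <- iota 1 (size r).+1] = p :: r.
    rewrite -[RHS](mkseq_nth p) /mkseq (iotaDl 1 0) -map_comp.
    by apply: eq_map => l; rewrite /f /= add0n; case: nth.
  have [Ep Er] : (f 1%N, a 1%N) = p /\ [seq (f l, a l) | l <- iota 2 (size r)] = r.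
    by case: Eps.
  have nth_in l : (l < (size r).+1)%N -> pair_in (nth p (p :: r) l).
    by move=> lr; apply: (allP psA); rewrite mem_nth.
  move: (CA (size r).+1 a f erefl); rewrite cam_word_iota cam_moment_iota Eps Ep Er; apply.
  - by case=> [|l] // /nth_in /andP[].
  - by case=> [|l] //= /nth_in /andP[].
rewrite cam_word_iota cam_moment_iota; apply: CAw; first exact: aA.
suff : all pair_in [seq (f l, a l) | l <- iota 1 n.+1] by [].
apply/allP => x /mapP[l]; rewrite mem_iota => /andP[l1 ln] ->.
by rewrite /pair_in aA ?fF ?l1 // -ltnS.
Qed.

(* Reads an alternating word as a cam_word, with 1 for a missing first or last letter of A. *)
Fixpoint cam_form (w : seq (A + F)) : A * seq (F * A) :=
  match w with
  | [::] => (1, [::])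
  | inl a :: w' => (a, (cam_form w').2)
  | inr f :: w' => (1, (f, (cam_form w').1) :: (cam_form w').2)
  end.

Lemma Bprod_cam_form w : sorted alt w ->
  Bprod (map embB w) = Bprod (map embB (cam_word (cam_form w).1 (cam_form w).2)).
Proof.
elim: w => [|t w IH] alt_w.
  by rewrite /= Bmul1l.
rewrite [LHS]/= IH ?(path_sorted alt_w) //; case: t alt_w => [a|f] alt_w /=.
  have -> : (cam_form w).1 = 1 by case: w alt_w {IH} => [|[?|?] ?].
  by rewrite Bmul1l.
by rewrite Bmul1l.
Qed.

Lemma phiW'_cam_form w :
  sorted alt w -> phiW' w = phiW' (cam_word (cam_form w).1 (cam_form w).2).
Proof. by move=> alt_w; rewrite /phiW' Bprod_cam_form. Qed.

Lemma cam_form_in w :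
  all centered w -> ((cam_form w).1 \in A1) && all pair_in (cam_form w).2.
Proof.
elim: w => [|[a|f] w IH] /=; first by rewrite A1_1.
  by case/andP=> /andP[-> _] /IH /andP[_ ->].
case/andP; rewrite {1}/centered => fF /IH /andP[a0A psA].
by rewrite A1_1 /= /pair_in fF a0A.
Qed.

Lemma inf_free_words_of_cam_words : cyclic_antimonotone_words -> inf_free_words.
Proof.
move=> CAw w alt_w cen_w.
have CAf p r : (cam_form w).2 = p :: r -> phiW' w = cam_moment (cam_form w).1 p r.
  have [a0A] := andP (cam_form_in cen_w).
  by move=> + Eps; rewrite phiW'_cam_form // Eps; exact: CAw.
case: w alt_w cen_w CAf => [|[a0|f] [|[a|f1] [|[a1|f2] [|[a2|f3] w]]]] //= _ cen CAf.
(* The words f a f ... and a0 f a f ... have an interior centered letter a. *)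
8,9: by case/and3P: cen => _ /centered_phi c _; rewrite (CAf _ _ erefl) cam_moment_cons c mul0r.
- exact: Phi0.
- exact: phiW'_inl.
- case/andP: cen => /centered_phi c0 _.
  by rewrite (CAf _ _ erefl) cam_moment_nil mulr1 c0 mul0r.
- by rewrite (CAf _ _ erefl) cam_moment_nil.
- case/and5P: cen => _ _ /centered_phi c1 _ _.
  by rewrite (CAf _ _ erefl) cam_moment_cons c1 mul0r.
- exact: phiW'_inr.
- case/and3P: cen => _ /centered_phi c _.
  by rewrite (CAf _ _ erefl) cam_moment_nil mul1r c mul0r.
Qed.

Lemma cyclic_antimonotone_words_inf_free : cyclic_antimonotone_words <-> inf_free_words.
Proof.
split; first exact: inf_free_words_of_cam_words.
by move=> IFw a0 p r; apply: phiW'_cam_word.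
Qed.

End NcpsB'.

Theorem proposition3p1 (R : realType) (A : algType R[i]) (F : lmodType R[i])
    (S : ncpsB' A F) (A1 : {pred A}) (F1 : {pred F})
    (A1_1 : 1 \in A1)
    (A1_D : forall x y, x \in A1 -> y \in A1 -> x + y \in A1)
    (A1_Z : forall (c : R[i]) x, x \in A1 -> c *: x \in A1)
    (A1_M : forall x y, x \in A1 -> y \in A1 -> x * y \in A1)
    (F1_0 : 0 \in F1)
    (F1_D : forall f g, f \in F1 -> g \in F1 -> f + g \in F1)
    (F1_Z : forall (c : R[i]) f, f \in F1 -> c *: f \in F1)
    (F1_M : forall f g, f \in F1 -> g \in F1 -> mulF S f g \in F1) :
  cyclic_antimonotone S A1 F1 <->
  inf_free S (fun i : bool => if i then A1' A1 else F1' F1).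
Proof.
rewrite (cyclic_antimonotoneP S A1 F1) (cyclic_antimonotone_words_inf_free A1_1 A1_D A1_Z F1_M).
split; [exact: inf_free_of_inf_free_words | exact: inf_free_words_of_inf_free].
Qed.
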